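(* Let $G = N \rtimes H$ be a finite group which is Involutive Yang-Baxter (IYB), and assume that $N$ is a Hall subgroup of $G$ (i.e. $\gcd(|N|,|G:N|)=1$). Then $H$ and $N$ are IYB, and $N$ has an $H$-equivariant IYB-structure, where $H$ acts on $N$ by conjugation.
   Context: For a group $G$ and a left $\mathbb Z G$-module $M$, a $1$-cocycle is a map $\chi: G \to M$ with $\chi(gh) = \chi(g) + g\chi(h)$ for all $g,h\in G$. A finite group $G$ is called Involutive Yang-Baxter (IYB) if there is a left $\mathbb Z G$-module $M$ and a bijective $1$-cocycle $\chi: G\to M$; the pair $(M,\chi)$ is then an IYB-structure on $G$. If a group $A$ acts on $G$ from the left by automorphisms (written $g\mapsto {}^a g$), an $A$-equivariant IYB-structure on $G$ is a pair $(M,\chi)$ where $M$ is a left $\mathbb Z[G\rtimes A]$-module and $\chi: G\to M$ (with $M$ regarded as a $G$-module by restriction) is a bijective $1$-cocycle satisfying $\chi({}^a g) = a\chi(g)$ for all $a\in A$, $g\in G$. *)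

From HB Require Import structures.
From mathcomp Require Import all_boot all_order all_algebra all_fingroup all_solvable.
Set Implicit Arguments. Unset Strict Implicit. Unset Printing Implicit Defensive.
Import GRing.Theory.
Local Open Scope group_scope.

Definition is_module (gT : finGroupType) (K : {set gT}) (M : zmodType)
    (act : gT -> M -> M) : Prop :=
  [/\ forall m, act 1 m = m,
      {in K &, forall x y m, act (x * y) m = act x (act y m)}
    & {in K, forall x m1 m2, act x (m1 + m2)%R = (act x m1 + act x m2)%R}].

Definition is_cocycle (gT : finGroupType) (G : {set gT}) (M : zmodType)
    (act : gT -> M -> M) (chi : gT -> M) : Prop :=
  {in G &, forall g h, chi (g * h) = (chi g + act g (chi h))%R}.

Definition bijective_on (gT : finGroupType) (G : {set gT}) (M : Type)
    (chi : gT -> M) : Prop :=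
  {in G &, injective chi} /\ (forall m : M, exists2 g, g \in G & chi g = m).

Definition IYB (gT : finGroupType) (G : {set gT}) : Prop :=
  exists (M : zmodType) (act : gT -> M -> M) (chi : gT -> M),
    [/\ is_module G act, is_cocycle G act chi & bijective_on G chi].

(* H-equivariant IYB-structure on N, where H acts on N by (left) conjugation
   n |-> h n h^-1 (= n ^ h^-1 in MathComp's right-conjugation notation).
   The group N x| H (for this conjugation action, with N :&: H = 1 and H
   normalizing N) is realized internally as the product N * H inside gT. *)
Definition equivariant_IYB (gT : finGroupType) (N H : {set gT}) : Prop :=
  exists (M : zmodType) (act : gT -> M -> M) (chi : gT -> M),
    [/\ is_module (N * H) act, is_cocycle N act chi, bijective_on N chi
      & {in H & N, forall h n, chi (n ^ h^-1) = act h (chi n)}].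

From Pilot Require Import Defs.
From HB Require Import structures.
From mathcomp Require Import all_boot all_order all_algebra all_fingroup all_solvable.
Set Implicit Arguments. Unset Strict Implicit. Unset Printing Implicit Defensive.
Import GRing.Theory.

(* Let chi : G -> M be a bijective 1-cocycle, n = |N| and k = |H|. As chi is a
   bijection, nk kills M, so M = M[n] + M[k] via the Chinese-remainder
   idempotents. On a subgroup K of order prime to d, a cocycle with values in
   M[d] is a coboundary (average over K). Hence an element x with
   n chi(x) = 0 and order prime to n fixes a point of the affine action
   a |-> chi x + x a, which is free, so x = 1; counting then shows that N is
   exactly chi^-1(M[n]). The M[k]-component of chi restricts to a bijection
   H -> M[k]. The M[n]-component of chi is a coboundary on H; correcting it by
   that coboundary gives a cocycle vanishing on H, hence commuting with the
   conjugation action of H, whose restriction to N is a bijection N -> M[n]. *)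

Local Open Scope ring_scope.

Section Torsion.
Variables (M : zmodType) (d : nat).

Definition torsion : {pred M} := fun m => m *+ d == 0.

Lemma torsionE m : (m \in torsion) = (m *+ d == 0). Proof. by []. Qed.

Fact torsion_zmod_closed : zmod_closed torsion.
Proof.
split=> [|x y]; rewrite !torsionE ?mul0rn // => /eqP xd /eqP yd.
by rewrite mulrnBl xd yd subrr.
Qed.
HB.instance Definition _ := GRing.isZmodClosed.Build M torsion torsion_zmod_closed.

Inductive torsion_sub : predArgType := TorsionSub m & m \in torsion.
Definition torsion_val w : M := let: TorsionSub m _ := w in m.
HB.instance Definition _ := [isSub of torsion_sub for torsion_val].
HB.instance Definition _ := [Choice of torsion_sub by <:].
HB.instance Definition _ := [SubChoice_isSubZmodule of torsion_sub by <:].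

Lemma torsion_valD (s1 s2 : torsion_sub) : val (s1 + s2) = val s1 + val s2.
Proof. by []. Qed.

End Torsion.

Lemma mulrn_eq_mod (M : zmodType) (m : M) d i j :
  m *+ d = 0 -> (i = j %[mod d])%N -> m *+ i = m *+ j.
Proof.
move=> md eij; rewrite (divn_eq i d) (divn_eq j d) eij !mulrnDr !mulrnA.
by rewrite ![m *+ _ *+ d]mulrnAC md !mul0rn.
Qed.

Lemma mulrn_dvd_eq0 (M : zmodType) (m : M) d j :
  m *+ d = 0 -> (d %| j)%N -> m *+ j = 0.
Proof. by move=> md /divnK <-; rewrite mulrnA mulrnAC md mul0rn. Qed.

(* Translation by m permutes M, so the sum S of all elements is S + m *+ |M|. *)
Lemma mulrn_size_enum (M : zmodType) (s : seq M) (m : M) :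
  uniq s -> (forall x, x \in s) -> m *+ size s = 0.
Proof.
move=> s_uniq s_full.
have s_perm : perm_eq s [seq x + m | x <- s].
  apply: uniq_perm => // [|x]; first by rewrite map_inj_uniq //; apply: addIr.
  by rewrite s_full -[x](subrK m) (mem_map (@addIr _ m)) s_full.
have : \sum_(x <- s) x = \sum_(x <- [seq x + m | x <- s]) x by apply: perm_big.
rewrite big_map big_split /= big_const_seq count_predT iter_addr_0 => sum_eq.
by apply: (addrI (\sum_(x <- s) x)); rewrite -sum_eq addr0.
Qed.

Section CoprimeSplitting.
Variables (M : zmodType) (a b : nat).
Hypotheses (co_ab : coprime a b) (torsion_ab : forall m : M, m *+ (a * b) = 0).

Lemma mulrn_chinese_split (m : M) :
  m = m *+ chinese a b 1 0 + m *+ chinese a b 0 1.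
Proof.
rewrite -mulrnDr -{1}(mulr1n m); apply: mulrn_eq_mod (torsion_ab m) _.
apply/eqP; rewrite chinese_remainder //.
rewrite -[((_ + _) %% a)%N]modnDm -[((_ + _) %% b)%N]modnDm.
by rewrite !chinese_modl ?chinese_modr // !mod0n addn0 add0n !modn_mod !eqxx.
Qed.

Lemma mulrn_chinese_torsionl (m : M) : m *+ chinese a b 1 0 *+ a = 0.
Proof.
rewrite -mulrnA (mulrn_dvd_eq0 (torsion_ab m)) // [(_ * a)%N]mulnC dvdn_mul //.
by rewrite /dvdn chinese_modr // mod0n.
Qed.

Lemma mulrn_chinese_torsionr (m : M) : m *+ chinese a b 0 1 *+ b = 0.
Proof.
rewrite -mulrnA (mulrn_dvd_eq0 (torsion_ab m)) // dvdn_mul //.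
by rewrite /dvdn chinese_modl // mod0n.
Qed.

Lemma mulrn_chinese_idl (m : M) : m *+ a = 0 -> m *+ chinese a b 1 0 = m.
Proof.
by move=> ma; rewrite -[RHS]mulr1n; apply: mulrn_eq_mod ma _; rewrite chinese_modl.
Qed.

Lemma mulrn_chinese_idr (m : M) : m *+ b = 0 -> m *+ chinese a b 0 1 = m.
Proof.
by move=> mb; rewrite -[RHS]mulr1n; apply: mulrn_eq_mod mb _; rewrite chinese_modr.
Qed.

Lemma mulrn_chinese_eq0r (m : M) : m *+ a = 0 -> m *+ chinese a b 0 1 = 0.
Proof.
by move=> ma; rewrite (mulrn_dvd_eq0 ma) // /dvdn chinese_modl // mod0n.
Qed.

End CoprimeSplitting.

Section ModuleFacts.
Variables (gT : finGroupType) (L : {set gT}) (M : zmodType) (act : gT -> M -> M).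
Hypothesis modL : is_module L act.

Lemma mod_act1 m : act 1%g m = m. Proof. by case: modL. Qed.

Lemma mod_actM : {in L &, forall x y m, act (x * y)%g m = act x (act y m)}.
Proof. by case: modL. Qed.

Lemma mod_actD x : x \in L -> {morph act x : m1 m2 / m1 + m2}.
Proof. by case: modL => _ _ actD /actD. Qed.

Lemma mod_act0 x : x \in L -> act x 0 = 0.
Proof.
by move=> Lx; apply: (addrI (act x 0)); rewrite -mod_actD // !addr0.
Qed.

Lemma mod_actN x : x \in L -> {morph act x : m / - m}.
Proof.
by move=> Lx m; apply: (addrI (act x m)); rewrite -mod_actD // !subrr mod_act0.
Qed.

Lemma mod_actB x : x \in L -> {morph act x : m1 m2 / m1 - m2}.
Proof. by move=> Lx m1 m2; rewrite mod_actD // mod_actN. Qed.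

Lemma mod_actMn x j : x \in L -> {morph act x : m / m *+ j}.
Proof.
move=> Lx m; elim: j => [|j IHj]; first by rewrite !mulr0n mod_act0.
by rewrite !mulrS mod_actD // IHj.
Qed.

Lemma mod_act_torsion x d m : x \in L -> m *+ d = 0 -> act x m *+ d = 0.
Proof. by move=> Lx md; rewrite -mod_actMn // md mod_act0. Qed.

Lemma is_module_sub (K : {set gT}) : K \subset L -> is_module K act.
Proof.
move=> /subsetP sKL; split; first exact: mod_act1.
  by move=> x y /sKL Lx /sKL Ly; apply: mod_actM.
by move=> x /sKL; apply: mod_actD.
Qed.

End ModuleFacts.

Section CocycleFacts.
Variables (gT : finGroupType) (G : {group gT}) (M : zmodType) (act : gT -> M -> M).
Hypothesis modG : is_module G act.
Variable f : gT -> M.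
Hypothesis cocf : is_cocycle G act f.

Lemma cocycle1 : f 1%g = 0.
Proof.
have := cocf (group1 G) (group1 G); rewrite mulg1 (mod_act1 modG) => f11.
by apply: (addrI (f 1%g)); rewrite addr0 -f11.
Qed.

Lemma cocycleV x : x \in G -> f x^-1%g = - act x^-1%g (f x).
Proof.
by move=> Gx; apply/eqP; rewrite -subr_eq0 opprK -cocf ?groupV // mulVg cocycle1.
Qed.

Lemma cocycle_mulrn e : is_cocycle G act (fun g => f g *+ e).
Proof. by move=> x y Gx Gy; rewrite cocf // mulrnDl (mod_actMn modG). Qed.

Lemma cocycle_add_coboundary c : is_cocycle G act (fun g => f g + act g c - c).
Proof.
move=> x y Gx Gy; rewrite cocf // (mod_actM modG) // (mod_actB modG) //.
rewrite (mod_actD modG) //.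
by rewrite [RHS]addrC !addrA [_ + f x + _]addrAC addrNK [_ + _ + f x]addrC !addrA.
Qed.

Definition cocycle_torsion d := [set g in G | f g *+ d == 0].

Lemma cocycle_torsion_group_set d : group_set (cocycle_torsion d).
Proof.
apply/group_setP; split; first by rewrite inE group1 cocycle1 mul0rn eqxx.
move=> x y; rewrite !inE => /andP[Gx /eqP fx] /andP[Gy /eqP fy].
by rewrite groupM //= cocf // mulrnDl fx add0r (mod_act_torsion modG).
Qed.

Lemma cocycle_sum_subgroup (K : {group gT}) g : K \subset G -> g \in K ->
  f g *+ #|K| = \sum_(h in K) f h - act g (\sum_(h in K) f h).
Proof.
move=> /subsetP sKG Kg; have Gg := sKG g Kg.
have shift : \sum_(h in K) f h = \sum_(h in K) (f g + act g (f h)).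
  rewrite (reindex_inj (mulgI g)) /=; apply: eq_big => h; rewrite groupMl //.
  by move=> Kh; rewrite cocf ?sKG.
rewrite {1}shift big_split sumr_const.
by rewrite -(big_morph _ (mod_actD modG Gg) (mod_act0 modG Gg)) addrK.
Qed.

(* Multiplying by an inverse of #|K| modulo d turns the identity of
   cocycle_sum_subgroup into an explicit coboundary. *)
Lemma cocycle_coboundary_coprime (K : {group gT}) d :
    K \subset G -> coprime d #|K| -> {in K, forall g, f g *+ d = 0} ->
  exists2 c, c *+ d = 0 & {in K, forall g, f g = c - act g c}.
Proof.
move=> sKG coK fK; pose e := chinese d #|K| 1 0.
have dvdKe : (#|K| %| e)%N by rewrite /dvdn chinese_modr // mod0n.
exists ((\sum_(h in K) f h) *+ (e %/ #|K|)).
  by rewrite mulrnAC -sumrMnl big1 ?mul0rn.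
move=> g Kg; rewrite (mod_actMn modG) ?(subsetP sKG) // -mulrnBl.
rewrite -cocycle_sum_subgroup // -mulrnA mulnC divnK // -[LHS]mulr1n.
by apply: mulrn_eq_mod (fK g Kg) _; rewrite chinese_modl.
Qed.

Lemma cocycle_conj_vanishing (H : {set gT}) : H \subset G ->
    {in H, forall h, f h = 0} ->
  {in H & G, forall h x, f (x ^ h^-1)%g = act h (f x)}.
Proof.
move=> /subsetP sHG fH h x Hh Gx; have Gh := sHG h Hh.
have fHV : f h^-1%g = 0 by rewrite cocycleV // fH // (mod_act0 modG) ?oppr0 ?groupV.
rewrite conjgE invgK cocf ?groupM ?groupV // fH // add0r cocf ?groupV // fHV.
by rewrite (mod_act0 modG) ?addr0.
Qed.

Lemma cocycle_inj_in (K : {group gT}) : K \subset G ->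
  {in K, forall g, f g = 0 -> g = 1%g} -> {in K &, injective f}.
Proof.
move=> /subsetP sKG fK_triv x y Kx Ky fxy.
have Gx := sKG x Kx; have Gy := sKG y Ky.
apply: (mulgI y^-1%g); rewrite mulVg; apply: fK_triv; first by rewrite groupM ?groupV.
by rewrite cocf ?groupV // cocycleV // fxy addNr.
Qed.

End CocycleFacts.

Section BijectiveCocycle.
Local Open Scope group_scope.
Variables (gT : finGroupType) (G : {group gT}) (M : zmodType).
Variables (act : gT -> M -> M) (chi : gT -> M).
Hypotheses (modG : is_module G act) (cocG : is_cocycle G act chi).
Hypothesis bijG : Defs.bijective_on G chi.

Let chi_inj : {in G &, injective chi} := proj1 bijG.
Let chi_onto : forall m, exists2 g, g \in G & chi g = m := proj2 bijG.

Canonical cocycle_torsion_group d := Group (cocycle_torsion_group_set modG cocG d).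

Lemma mulrn_card_bijective_on (m : M) : m *+ #|G| = 0.
Proof.
rewrite cardE -(size_map chi); apply: mulrn_size_enum => [|x].
  by rewrite map_inj_in_uniq ?enum_uniq // => x y; rewrite !mem_enum; apply: chi_inj.
by have [g Gg <-] := chi_onto x; rewrite map_f ?mem_enum.
Qed.

(* With a = chi y, the fixed-point equation reads chi (x * y) = chi y. *)
Lemma bij_cocycle_affine_fix x a : x \in G -> chi x + act x a = a -> x = 1%g.
Proof.
move=> Gx xa; have [y Gy ya] := chi_onto a; rewrite -ya -cocG // in xa.
by apply: (mulIg y); rewrite mul1g; apply: chi_inj; rewrite ?groupM.
Qed.

Lemma bij_cocycle_torsion_coprime x d :
  x \in G -> chi x *+ d = 0 -> coprime d #[x] -> x = 1.
Proof.
move=> Gx chi_x co_dx.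
have sXT : <[x]> \subset cocycle_torsion G chi d.
  by rewrite cycle_subG inE Gx chi_x /=.
have sXG : <[x]> \subset G by rewrite cycle_subG.
have torsX : {in <[x]>, forall g, chi g *+ d = 0}.
  by move=> g /(subsetP sXT); rewrite inE => /andP[_ /eqP].
have [c _ cob] := cocycle_coboundary_coprime modG cocG sXG co_dx torsX.
by apply: (bij_cocycle_affine_fix (a := c)) => //; rewrite cob ?cycle_id ?subrK.
Qed.

Lemma cocycle_torsion_TI d (K : {group gT}) :
  coprime d #|K| -> cocycle_torsion G chi d :&: K = 1%g.
Proof.
move=> co_dK; apply/trivgP/subsetP => x; rewrite !inE => /andP[/andP[Gx /eqP chi_x] Kx].
by apply/eqP/(bij_cocycle_torsion_coprime Gx chi_x)/(coprime_dvdr (order_dvdG Kx)).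
Qed.

Lemma card_cocycle_torsion_le d (K : {group gT}) :
  K \subset G -> coprime d #|K| -> (#|cocycle_torsion G chi d| * #|K| <= #|G|)%N.
Proof.
move=> sKG co_dK; rewrite -(TI_cardMg (cocycle_torsion_TI co_dK)).
apply/subset_leq_card/mul_subG => //.
by apply/subsetP => x; rewrite inE => /andP[].
Qed.

Lemma cocycle_torsion_mul_cover a b : coprime a b -> #|G| = (a * b)%N ->
  G \subset cocycle_torsion G chi a * cocycle_torsion G chi b.
Proof.
move=> co_ab oG; have torsion_ab (m : M) : m *+ (a * b) = 0.
  by rewrite -oG mulrn_card_bijective_on.
apply/subsetP => g Gg.
have [x Gx chi_x] := chi_onto (chi g *+ chinese a b 1 0).
have [y Gy chi_y] := chi_onto (act x^-1 (chi g *+ chinese a b 0 1)).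
have -> : g = x * y.
  apply: chi_inj; rewrite ?groupM // cocG // chi_x chi_y.
  rewrite -(mod_actM modG) ?groupV // mulgV (mod_act1 modG).
  exact: mulrn_chinese_split.
apply: mem_mulg; rewrite inE ?Gx ?Gy /=.
  by rewrite chi_x (mulrn_chinese_torsionl co_ab).
by rewrite chi_y (mod_act_torsion modG) ?groupV // (mulrn_chinese_torsionr co_ab).
Qed.

End BijectiveCocycle.

Section TorsionRestriction.
Variables (gT : finGroupType) (L : {group gT}) (M : zmodType).
Variables (act : gT -> M -> M) (d : nat).
Hypothesis modL : is_module L act.

Definition torsion_act x (s : torsion_sub M d) : torsion_sub M d :=
  insubd s (act x (val s)).

Definition torsion_restr (f : gT -> M) g : torsion_sub M d := insubd 0 (f g).

Lemma val_torsion_act x s : x \in L -> val (torsion_act x s) = act x (val s).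
Proof.
move=> Lx; rewrite insubdK // torsionE (mod_act_torsion modL) //.
by apply/eqP; apply: (valP s).
Qed.

Lemma val_torsion_restr f g : f g *+ d = 0 -> val (torsion_restr f g) = f g.
Proof. by move=> fg; rewrite insubdK // torsionE fg. Qed.

Lemma torsion_act_module : is_module L torsion_act.
Proof.
split=> [s|x y Lx Ly s|x Lx s1 s2]; apply: val_inj.
- by rewrite /torsion_act (mod_act1 modL) valKd.
- by rewrite !val_torsion_act ?groupM // (mod_actM modL).
by rewrite val_torsion_act // !torsion_valD (mod_actD modL Lx) !val_torsion_act.
Qed.

Variables (K : {group gT}) (f : gT -> M).
Hypotheses (sKL : K \subset L) (cocf : is_cocycle K act f).
Hypotheses (f_inj : {in K &, injective f}) (f_tors : {in K, forall g, f g *+ d = 0}).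
Hypothesis f_onto : forall m, m *+ d = 0 -> exists2 g, g \in K & f g = m.

Lemma torsion_restr_cocycle : is_cocycle K torsion_act (torsion_restr f).
Proof.
move=> x y Kx Ky; apply: val_inj; have Lx := subsetP sKL x Kx.
have Kxy := groupM Kx Ky.
rewrite torsion_valD (val_torsion_act _ Lx) (val_torsion_restr (f_tors Kxy)).
by rewrite (val_torsion_restr (f_tors Kx)) (val_torsion_restr (f_tors Ky)) cocf.
Qed.

Lemma torsion_restr_bij : Defs.bijective_on K (torsion_restr f).
Proof.
split=> [x y Kx Ky fxy|s].
  apply: f_inj => //; rewrite -(val_torsion_restr (f_tors Kx)).
  by rewrite -(val_torsion_restr (f_tors Ky)) fxy.
have [g Kg fg] := f_onto (eqP (valP s)).
by exists g => //; apply: val_inj; rewrite val_torsion_restr ?f_tors.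
Qed.

Lemma IYB_torsion_restr : IYB K.
Proof.
exists (torsion_sub M d), torsion_act, (torsion_restr f); split.
- exact: (is_module_sub torsion_act_module sKL).
- exact: torsion_restr_cocycle.
- exact: torsion_restr_bij.
Qed.

Lemma equivariant_IYB_torsion_restr (H : {set gT}) : (K * H)%g = L ->
    {in H & K, forall h x, f (x ^ h^-1)%g = act h (f x)} ->
  equivariant_IYB K H.
Proof.
move=> defL f_eqv; have sHL : H \subset L by rewrite -defL mulG_subr.
exists (torsion_sub M d), torsion_act, (torsion_restr f); split.
- by rewrite defL; apply: torsion_act_module.
- exact: torsion_restr_cocycle.
- exact: torsion_restr_bij.
move=> h x Hh Kx; have Lh := subsetP sHL h Hh; apply: val_inj.
rewrite (val_torsion_act _ Lh) (val_torsion_restr (f_tors Kx)) /torsion_restr.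
by rewrite f_eqv // insubdK // torsionE (mod_act_torsion modL Lh) ?f_tors.
Qed.

End TorsionRestriction.

Section HallSemidirect.
Local Open Scope group_scope.
Variables (gT : finGroupType) (G N H : {group gT}).
Hypotheses (sdG : N ><| H = G) (hallN : Hall G N).
Variables (M : zmodType) (act : gT -> M -> M) (chi : gT -> M).
Hypotheses (modG : is_module G act) (cocG : is_cocycle G act chi).
Hypothesis bijG : Defs.bijective_on G chi.

Let chi_onto : forall m, exists2 g, g \in G & chi g = m := proj2 bijG.

Let nsNG : N <| G. Proof. by case/sdprod_context: sdG. Qed.
Let sNG : N \subset G. Proof. exact: normal_sub nsNG. Qed.
Let sHG : H \subset G. Proof. by case/sdprod_context: sdG. Qed.
Let mulNH : N * H = G. Proof. by case/sdprod_context: sdG. Qed.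
Let mulHN : H * N = G. Proof. exact: sdprodWC sdG. Qed.
Let tiNH : N :&: H = 1. Proof. by case/sdprod_context: sdG. Qed.
Let oG : #|G| = (#|N| * #|H|)%N. Proof. by rewrite (sdprod_card sdG). Qed.
Let coNH : coprime #|N| #|H|.
Proof. by case/andP: hallN => _; rewrite (index_sdprod sdG). Qed.
Let coHN : coprime #|H| #|N|. Proof. by rewrite coprime_sym. Qed.
Let chi_tors (m : M) : m *+ (#|N| * #|H|) = 0.
Proof. by rewrite -oG (mulrn_card_bijective_on bijG). Qed.

Let torsion_group d := Group (cocycle_torsion_group_set modG cocG d).

Lemma cocycle_torsion_normal_Hall : cocycle_torsion G chi #|N| = N.
Proof.
have leSN := card_cocycle_torsion_le modG cocG bijG sHG coNH.
have leSH := card_cocycle_torsion_le modG cocG bijG sNG coHN.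
have cover := cocycle_torsion_mul_cover modG cocG bijG coNH oG.
set SN := cocycle_torsion G chi #|N| in leSN cover *.
set SH := cocycle_torsion G chi #|H| in leSH cover.
have leG : (#|G| <= #|SN| * #|SH|)%N.
  rewrite (mul_cardG (torsion_group _) (torsion_group _)).
  exact: leq_trans (subset_leq_card cover) (leq_pmulr _ (cardG_gt0 _)).
have leSN' : (#|SN| <= #|N|)%N by rewrite -(leq_pmul2r (cardG_gt0 H)) -oG.
have leSH' : (#|SH| <= #|H|)%N.
  by rewrite -(leq_pmul2r (cardG_gt0 N)) [(#|H| * _)%N]mulnC -oG.
have cardSN : #|SN| = #|N|.
  apply/eqP; rewrite eqn_leq leSN' -(leq_pmul2r (cardG_gt0 H)) -oG.
  by rewrite (leq_trans leG) // leq_mul2l leSH' orbT.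
have sSNG : SN \subset G by apply/subsetP => x; rewrite inE => /andP[].
have sSN : SN \subset N.
  rewrite (sub_normal_Hall (K := torsion_group _) (Hall_pi hallN) nsNG sSNG).
  by rewrite /pgroup cardSN pnat_pi ?cardG_gt0.
by apply/eqP; rewrite eqEcard sSN cardSN leqnn.
Qed.

Lemma mem_normal_Hall_torsion x : x \in G -> (x \in N) = (chi x *+ #|N| == 0).
Proof. by move=> Gx; rewrite -{1}cocycle_torsion_normal_Hall inE Gx. Qed.

Let chiH g := chi g *+ chinese #|N| #|H| 0 1.

Let chiH_cocycle : is_cocycle G act chiH. Proof. exact: cocycle_mulrn. Qed.

Let chiH_tors : {in H, forall h, chiH h *+ #|H| = 0}.
Proof. by move=> h _; apply: mulrn_chinese_torsionr. Qed.

Let chiH_inj : {in H &, injective chiH}.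
Proof.
apply: (cocycle_inj_in modG chiH_cocycle sHG) => h Hh chiH0.
have Nh : h \in N.
  rewrite mem_normal_Hall_torsion ?(subsetP sHG) //.
  rewrite (mulrn_chinese_split coNH chi_tors (chi h)) -/(chiH h) chiH0 addr0.
  by rewrite mulrn_chinese_torsionl.
by apply/set1gP; rewrite -tiNH inE Nh.
Qed.

Let chiH_onto b : b *+ #|H| = 0 -> exists2 h, h \in H & chiH h = b.
Proof.
move=> b_tors; have [g Gg chi_g] := chi_onto b.
move: Gg chi_g; rewrite -mulHN => /mulsgP[h x Hh Nx ->] chi_hx.
have Gh := subsetP sHG h Hh; have Gx := subsetP sNG x Nx.
have chi_x : chi x *+ #|N| = 0 by apply/eqP; rewrite -mem_normal_Hall_torsion.
exists h => //; rewrite -(mulrn_chinese_idr coNH b_tors) -chi_hx /chiH cocG //.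
rewrite mulrnDl -(mod_actMn modG) // (mulrn_chinese_eq0r coNH chi_x).
by rewrite (mod_act0 modG) ?addr0.
Qed.

Lemma IYB_sdprod_complement : IYB H.
Proof.
apply: (IYB_torsion_restr modG sHG _ chiH_inj chiH_tors chiH_onto).
by move=> x y /(subsetP sHG) Gx /(subsetP sHG) Gy; apply: chiH_cocycle.
Qed.

Let chiN g := chi g *+ chinese #|N| #|H| 1 0.

Let chiN_cocycle : is_cocycle G act chiN. Proof. exact: cocycle_mulrn. Qed.

Let chiN_N x : x \in N -> chiN x = chi x.
Proof.
move=> Nx; apply: mulrn_chinese_idl => //; apply/eqP.
by rewrite -mem_normal_Hall_torsion ?(subsetP sNG).
Qed.

Section Coboundary.
Variable c : M.
Hypotheses (c_tors : c *+ #|N| = 0) (chiN_H : {in H, forall h, chiN h = c - act h c}).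

Let psi g := chiN g + act g c - c.

Let psi_cocycle : is_cocycle G act psi.
Proof. exact: cocycle_add_coboundary. Qed.

Let psi_tors : {in G, forall g, psi g *+ #|N| = 0}.
Proof.
move=> g Gg; rewrite mulrnBl mulrnDl (mod_act_torsion modG) // c_tors subr0 addr0.
exact: mulrn_chinese_torsionl.
Qed.

Let psi_inj : {in N &, injective psi}.
Proof.
apply: (cocycle_inj_in modG psi_cocycle sNG) => x Nx /eqP.
rewrite subr_eq0 chiN_N // => /eqP fix_c.
exact: (bij_cocycle_affine_fix cocG bijG (subsetP sNG x Nx) fix_c).
Qed.

Let psi_onto a : a *+ #|N| = 0 -> exists2 x, x \in N & psi x = a.
Proof.
move=> a_tors; have [z Gz chi_z] := chi_onto (a + c); have [y Gy chi_y] := chi_onto c.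
have Nz : z \in N by rewrite mem_normal_Hall_torsion // chi_z mulrnDl a_tors c_tors addr0.
have Ny : y \in N by rewrite mem_normal_Hall_torsion // chi_y c_tors.
have Nx : z * y^-1 \in N by rewrite groupM ?groupV.
exists (z * y^-1) => //; apply: (addIr c); rewrite /psi subrK chiN_N //.
by rewrite -chi_z -chi_y -cocG ?(subsetP sNG) // mulgKV.
Qed.

Let psi_torsN : {in N, forall x, psi x *+ #|N| = 0}.
Proof. by move=> x /(subsetP sNG); apply: psi_tors. Qed.

Let psi_cocycleN : is_cocycle N act psi.
Proof. by move=> x y /(subsetP sNG) Gx /(subsetP sNG) Gy; apply: psi_cocycle. Qed.

Let psi_H : {in H, forall h, psi h = 0}.
Proof. by move=> h Hh; rewrite /psi chiN_H // subrK subrr. Qed.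

Lemma equivariant_IYB_of_coboundary : equivariant_IYB N H.
Proof.
apply: (equivariant_IYB_torsion_restr modG sNG psi_cocycleN psi_inj psi_torsN
  psi_onto mulNH).
move=> h x Hh /(subsetP sNG) Gx.
exact: (cocycle_conj_vanishing modG psi_cocycle sHG psi_H).
Qed.

End Coboundary.

Lemma equivariant_IYB_sdprod_normal : equivariant_IYB N H.
Proof.
have chiN_torsH : {in H, forall h, chiN h *+ #|N| = 0}.
  by move=> h _; apply: mulrn_chinese_torsionl.
have [c c_tors chiN_H] :=
  cocycle_coboundary_coprime modG chiN_cocycle sHG coNH chiN_torsH.
exact: (equivariant_IYB_of_coboundary c_tors chiN_H).
Qed.

End HallSemidirect.

Lemma equivariant_IYB_IYB (gT : finGroupType) (N H : {group gT}) :
  equivariant_IYB N H -> IYB N.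
Proof.
case=> M [act [chi [modNH cocN bijN _]]]; exists M, act, chi; split=> //.
exact: (is_module_sub modNH (mulG_subl _ _)).
Qed.

Local Open Scope group_scope.

Theorem mainTheorem1 (gT : finGroupType) (G N H : {group gT}) :
  N ><| H = G -> Hall G N -> IYB G ->
  [/\ IYB H, IYB N & equivariant_IYB N H].
Proof.
move=> sdG hallN [M [act [chi [modG cocG bijG]]]].
have eqvN := equivariant_IYB_sdprod_normal sdG hallN modG cocG bijG.
split; [exact: (IYB_sdprod_complement sdG hallN modG cocG bijG) | | by []].
exact: (equivariant_IYB_IYB eqvN).
Qed.
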